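(* Let $H_5$ be the 3-graph with vertex set $[6]$ and edges $142,143,145,146,251,253,254,256,361,362,364,365$. Then $\lambda(H_5)\le\frac{1}{16}$.
   Context: For a 3-uniform hypergraph $H$ on vertices $1,\dots,m$, its Lagrangian is $\lambda(H)=\max\{\sum_{ijk\in E(H)}x_ix_jx_k : x\in[0,1]^m,\ x_1+\dots+x_m=1\}$. *)

From mathcomp Require Import all_boot all_order all_algebra.
From mathcomp Require Import classical_sets reals.
Set Implicit Arguments. Unset Strict Implicit. Unset Printing Implicit Defensive.
Import Order.TTheory GRing.Theory Num.Theory.
Local Open Scope ring_scope.
Local Open Scope classical_set_scope.

(* A hypergraph on vertex set 'I_m (vertices 1..m of the paper are 0..m-1)
   is given by its edge set E : {set {set 'I_m}}; it is 3-uniform when every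
   edge has exactly 3 elements. *)
Definition uniform3 (m : nat) (E : {set {set 'I_m}}) : bool :=
  [forall e in E, #|e| == 3%N].

Definition lag_poly (R : realType) (m : nat) (E : {set {set 'I_m}})
  (x : 'I_m -> R) : R := \sum_(e in E) \prod_(i in e) x i.

Definition simplex (R : realType) (m : nat) : set ('I_m -> R) :=
  [set x | (forall i, 0 <= x i <= 1) /\ \sum_i x i = 1].

(* Lagrangian: the maximum (= supremum, attained by compactness) of the
   edge polynomial over the simplex. *)
Definition lagrangian (R : realType) (m : nat) (E : {set {set 'I_m}}) : R :=
  sup [set lag_poly E x | x in @simplex R m].

Definition v6 (k : nat) : 'I_6 := inord k.-1.
Definition e6 (a b c : nat) : {set 'I_6} := [set v6 a; v6 b; v6 c].

Definition H5 : {set {set 'I_6}} :=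
  [set e6 1 4 2; e6 1 4 3; e6 1 4 5; e6 1 4 6;
       e6 2 5 1; e6 2 5 3; e6 2 5 4; e6 2 5 6;
       e6 3 6 1; e6 3 6 2; e6 3 6 4; e6 3 6 5].

(* Group the vertices into the pairs {1,4}, {2,5}, {3,6}, of total weights a, b, c.
   Every edge of H5 is one of these pairs together with a vertex outside it, so the
   edge polynomial is sum x1 x4 (b + c) + ..., which AM-GM (x1 x4 <= a^2/4) bounds by
   (a^2 (b + c) + b^2 (c + a) + c^2 (a + b)) / 4.  By Schur's inequality and abc >= 0
   this is at most (a + b + c)^3 / 16 = 1/16. *)

From mathcomp Require Import all_boot all_order all_algebra.
From mathcomp Require Import reals ring lra.
Set Implicit Arguments. Unset Strict Implicit. Unset Printing Implicit Defensive.
Import Order.TTheory GRing.Theory Num.Theory.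
Local Open Scope ring_scope.

Section CubicBounds.
Variable R : realDomainType.

Lemma schur_ge0 (a b c : R) : 0 <= a -> 0 <= b -> 0 <= c ->
  0 <= a * (a - b) * (a - c) + b * (b - c) * (b - a) + c * (c - a) * (c - b).
Proof.
pose S u v w : R := u * (u - v) * (u - w) + v * (v - w) * (v - u) + w * (w - u) * (w - v).
have S_last_min u v w : 0 <= w -> w <= u -> w <= v -> 0 <= S u v w.
  move=> w0 wu wv.
  have -> : S u v w = (u - v) ^+ 2 * (u + v - w) + w * (u - w) * (v - w) by rewrite /S; ring.
  apply: addr_ge0; first by rewrite mulr_ge0 ?sqr_ge0 //; lra.
  by rewrite !mulr_ge0 ?subr_ge0.
move=> a0 b0 c0; rewrite -/(S a b c).
have S_cyc u v w : S u v w = S v w u by rewrite /S; ring.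
have [ab|ba] := leP a b.
- have [ac|ca] := leP a c; last by apply: S_last_min; lra.
  by rewrite S_cyc; apply: S_last_min.
- have [bc|cb] := leP b c; last by apply: S_last_min; lra.
  by rewrite S_cyc S_cyc; apply: S_last_min; lra.
Qed.

Lemma sum_sqr_mul_le_cube (a b c : R) :
  0 <= a -> 0 <= b -> 0 <= c ->
  4 * (a ^+ 2 * (b + c) + b ^+ 2 * (c + a) + c ^+ 2 * (a + b)) <= (a + b + c) ^+ 3.
Proof.
move=> a0 b0 c0; rewrite -subr_ge0.
have -> : (a + b + c) ^+ 3 - 4 * (a ^+ 2 * (b + c) + b ^+ 2 * (c + a) + c ^+ 2 * (a + b))
    = a * (a - b) * (a - c) + b * (b - c) * (b - a) + c * (c - a) * (c - b) + 3 * (a * b * c).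
  by ring.
by rewrite addr_ge0 ?schur_ge0 ?mulr_ge0.
Qed.

Lemma mul_pairs_le_cube (u1 v1 u2 v2 u3 v3 : R) :
  0 <= u1 -> 0 <= v1 -> 0 <= u2 -> 0 <= v2 -> 0 <= u3 -> 0 <= v3 ->
  16 * (u1 * v1 * (u2 + v2 + (u3 + v3)) + u2 * v2 * (u3 + v3 + (u1 + v1))
        + u3 * v3 * (u1 + v1 + (u2 + v2)))
  <= (u1 + v1 + (u2 + v2) + (u3 + v3)) ^+ 3.
Proof.
move=> u1_0 v1_0 u2_0 v2_0 u3_0 v3_0.
have AGM (u v w : R) : 0 <= w -> 4 * (u * v * w) <= (u + v) ^+ 2 * w.
  move=> w0; rewrite mulrA; apply: (ler_wpM2r w0).
  by rewrite mulrC mulr_natr (leif_AGM2_scaled u v).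
apply: le_trans _ (sum_sqr_mul_le_cube (addr_ge0 u1_0 v1_0) (addr_ge0 u2_0 v2_0)
                                      (addr_ge0 u3_0 v3_0)).
have -> (p q r : R) : 16 * (p + q + r) = 4 * (4 * p + 4 * q + 4 * r) by ring.
by rewrite ler_pM2l // !lerD ?AGM ?addr_ge0.
Qed.
End CubicBounds.

Lemma ler_sum_set_seq (R : numDomainType) (T : finType) (s : seq T) (F : T -> R) :
  (forall i, 0 <= F i) -> \sum_(i in [set:: s]) F i <= \sum_(i <- s) F i.
Proof.
move=> F_ge0; elim: s => [|a s IHs]; first by rewrite set_nil big_set0 big_nil.
rewrite set_cons big_cons; have [a_s | a_s] := boolP (a \in [set:: s]).
  by rewrite (setUidPr _) ?sub1set // ler_wpDl.
by rewrite big_setU1 // lerD2l.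
Qed.

Lemma prod_set3 (R : comPzSemiRingType) (T : finType) (a b c : T) (F : T -> R) :
  a != b -> a != c -> b != c -> \prod_(i in [set a; b; c]) F i = F a * F b * F c.
Proof.
move=> ab ac bc; rewrite setUC big_setU1; last by rewrite !inE negb_or eq_sym ac eq_sym.
by rewrite big_setU1 ?inE // big_set1 /= mulrC.
Qed.

Lemma lag_poly_H5_le (R : realType) (x : 'I_6 -> R) : (forall i, 0 <= x i) ->
  lag_poly H5 x <=
    x (v6 1) * x (v6 4) * (x (v6 2) + x (v6 5) + (x (v6 3) + x (v6 6)))
  + x (v6 2) * x (v6 5) * (x (v6 3) + x (v6 6) + (x (v6 1) + x (v6 4)))
  + x (v6 3) * x (v6 6) * (x (v6 1) + x (v6 4) + (x (v6 2) + x (v6 5))).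
Proof.
move=> x_ge0; rewrite /lag_poly.
have -> : H5 = [set:: [:: e6 1 4 2; e6 1 4 3; e6 1 4 5; e6 1 4 6;
                          e6 2 5 1; e6 2 5 3; e6 2 5 4; e6 2 5 6;
                          e6 3 6 1; e6 3 6 2; e6 3 6 4; e6 3 6 5]].
  by apply/setP => e; rewrite !inE !orbA.
(* An upper bound suffices, so the listed edges need not be shown pairwise distinct. *)
have prod_ge0 (e : {set 'I_6}) : 0 <= \prod_(i in e) x i by exact: prodr_ge0.
apply: le_trans (ler_sum_set_seq _ prod_ge0) _.
rewrite !big_cons big_nil /e6 !prod_set3; try by rewrite -val_eqE /= !inordK.
lra.
Qed.

Lemma sum_ord6 (V : nmodType) (x : 'I_6 -> V) :
  \sum_i x i = x (v6 1) + x (v6 2) + x (v6 3) + x (v6 4) + x (v6 5) + x (v6 6).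
Proof.
rewrite !big_ord_recl big_ord0 addr0 !addrA.
by congr (_ + _ + _ + _ + _ + _); congr x; apply/val_inj; rewrite /v6 /= inordK.
Qed.

Theorem lemma3p3 (R : realType) : lagrangian R H5 <= 1 / 16.
Proof.
apply: ge_sup.
  exists (lag_poly H5 (fun=> 6^-1 : R)), (fun=> 6^-1 : R) => //.
  split=> [i|]; first by apply/andP; split; lra.
  by rewrite sumr_const card_ord; lra.
move=> _ [x [x01 x_sum1] <-].
have x_ge0 i : 0 <= x i by case/andP: (x01 i).
apply: le_trans (lag_poly_H5_le x_ge0) _.
have := mul_pairs_le_cube (x_ge0 (v6 1)) (x_ge0 (v6 4)) (x_ge0 (v6 2))
                          (x_ge0 (v6 5)) (x_ge0 (v6 3)) (x_ge0 (v6 6)).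
rewrite sum_ord6 in x_sum1.
have -> : x (v6 1) + x (v6 4) + (x (v6 2) + x (v6 5)) + (x (v6 3) + x (v6 6)) = 1 by lra.
rewrite expr1n; lra.
Qed.
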